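(* $\mathrm{cof}^{*}(\mathcal{S}pl)=\mathfrak{c}$.
   Context: For an infinite $A\subseteq\omega$, let $S(A)$ be the set of all $\sigma\in2^{<\omega}$ such that $\sigma$ is constant on $A\cap\mathrm{dom}(\sigma)$. The splitting ideal $\mathcal{S}pl$ is the ideal on $2^{<\omega}$ generated by the sets $S(A)$, $A\in[\omega]^{\omega}$. For an ideal $\mathcal{J}$, $\mathrm{cof}^*(\mathcal{J})=\min\{|\mathcal{F}|:\mathcal{F}\subseteq\mathcal{J}$ and for every $Y\in\mathcal{J}$ there is $F\in\mathcal{F}$ with $Y\subseteq^{*}F\}$. *)

(* 2^{<omega} = list bool; subsets are predicates. *)
From Stdlib Require Import List Arith.
Import ListNotations.

Definition infinite_nat (A : nat -> Prop) : Prop :=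
  forall n, exists m, n <= m /\ A m.

Definition S (A : nat -> Prop) (s : list bool) : Prop :=
  forall i j, A i -> A j -> i < length s -> j < length s ->
    nth i s false = nth j s false.

Definition finite_set (P : list bool -> Prop) : Prop :=
  exists l : list (list bool), forall x, P x -> In x l.

Definition Spl (Y : list bool -> Prop) : Prop :=
  exists As : list (nat -> Prop),
    (forall A, In A As -> infinite_nat A) /\
    (forall s, Y s -> exists A, In A As /\ S A s).

Definition subset_star (Y X : list bool -> Prop) : Prop :=
  finite_set (fun s => Y s /\ ~ X s).

Definition cofinal_Spl (F : (list bool -> Prop) -> Prop) : Prop :=
  (forall X, F X -> Spl X) /\
  (forall Y, Spl Y -> exists X, F X /\ subset_star Y X).

(* Cardinal comparisons with the continuum c = |2^omega|, via injections. *)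
Definition card_le_c {T : Type} (P : T -> Prop) : Prop :=
  exists f : {x : T | P x} -> (nat -> bool),
    forall a b, f a = f b -> a = b.
Definition c_le_card {T : Type} (P : T -> Prop) : Prop :=
  exists g : (nat -> bool) -> {x : T | P x},
    forall a b, g a = g b -> a = b.

(* Spl is a family of subsets of the countable set 2^{<omega}, so it has at
   most c elements, and it is cofinal in itself.  Conversely, the sets A_r of
   codes of initial segments of the branches r in 2^omega are pairwise almost
   disjoint.  If S(A_r) is almost contained in X and X is covered by
   S(C_1), ..., S(C_k), then some C_i is almost contained in A_r: otherwise a
   colouring that is constant on A_r but splits every C_i yields arbitrarily
   long sequences in S(A_r) outside X.  As C_i determines r, each member of a
   cofinal family accounts for finitely many branches only, and a diagonal
   argument turns this into an injection of 2^omega into the family. *)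

From Stdlib Require Import List Arith Lia Classical ClassicalEpsilon.
From Stdlib Require Import FunctionalExtensionality PropExtensionality.
From Stdlib Require Import ProofIrrelevance Cantor.
Import ListNotations.

Fixpoint code (l : list bool) : nat :=
  match l with
  | [] => 0
  | b :: l' => (if b then 2 else 1) + 2 * code l'
  end.

Lemma code_inj (l1 l2 : list bool) : code l1 = code l2 -> l1 = l2.
Proof.
  revert l2; induction l1 as [|b l1 IH]; intros [|b' l2]; simpl; intros H.
  - reflexivity.
  - destruct b'; lia.
  - destruct b; lia.
  - destruct b, b'; try lia; f_equal; apply IH; lia.
Qed.

Lemma length_le_code (l : list bool) : length l <= code l.
Proof. induction l as [|b l IH]; simpl; [lia | destruct b; lia]. Qed.

Lemma code_lt_pow (l : list bool) : code l < 2 ^ (length l + 1).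
Proof.
  enough (code l + 2 <= 2 ^ (length l + 1)) by lia.
  induction l as [|b l IH]; simpl in *; [lia | destruct b; lia].
Qed.

Lemma card_le_c_sets_of_list_bool (P : (list bool -> Prop) -> Prop) :
  card_le_c P.
Proof.
  set (indicator (X : list bool -> Prop) (n : nat) :=
         if excluded_middle_informative (exists s, code s = n /\ X s)
         then true else false).
  assert (indicator_code : forall X s, indicator X (code s) = true <-> X s).
  { intros X s; unfold indicator.
    destruct (excluded_middle_informative _) as [[s' [Hs' Xs']]|Hno].
    - apply code_inj in Hs'; subst s'; tauto.
    - split; [discriminate | intros Xs; exfalso; eauto]. }
  exists (fun X => indicator (proj1_sig X)).
  intros X Y HXY; apply eq_sig_hprop; [intros; apply proof_irrelevance|].
  apply functional_extensionality; intros s; apply propositional_extensionality.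
  rewrite <- !indicator_code, HXY; tauto.
Qed.

Lemma cofinal_Spl_Spl : cofinal_Spl Spl.
Proof.
  split; [auto|].
  intros Y HY; exists Y; split; [assumption|].
  exists []; intros s [Ys nYs]; contradiction.
Qed.

Lemma Spl_S (A : nat -> Prop) : infinite_nat A -> Spl (S A).
Proof.
  intros HA; exists [A]; split.
  - intros A' [<-|[]]; exact HA.
  - intros s Hs; exists A; split; [left|]; auto.
Qed.

Definition almost_sub (C A : nat -> Prop) : Prop :=
  exists n0, forall m, n0 <= m -> C m -> A m.

Definition prefix (r : nat -> bool) (n : nat) : list bool := map r (seq 0 n).

Lemma length_prefix (r : nat -> bool) (n : nat) : length (prefix r n) = n.
Proof. unfold prefix; rewrite length_map, length_seq; reflexivity. Qed.

Lemma nth_prefix (r : nat -> bool) (n i : nat) :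
  i < n -> nth i (prefix r n) false = r i.
Proof.
  intros Hi; unfold prefix.
  rewrite (nth_indep _ false (r 0)) by (rewrite length_map, length_seq; auto).
  rewrite map_nth, seq_nth; auto.
Qed.

Definition branch (r : nat -> bool) (m : nat) : Prop :=
  exists n, m = code (prefix r n).

Lemma infinite_branch (r : nat -> bool) : infinite_nat (branch r).
Proof.
  intros n; exists (code (prefix r n)); split; [|exists n; reflexivity].
  rewrite <- (length_prefix r n) at 1; apply length_le_code.
Qed.

Lemma branch_almost_unique (C : nat -> Prop) (r s : nat -> bool) :
  infinite_nat C -> almost_sub C (branch r) -> almost_sub C (branch s) -> r = s.
Proof.
  intros HC [n1 Hr] [n2 Hs]; apply functional_extensionality; intros k.
  destruct (HC (n1 + n2 + 2 ^ (k + 1))) as [m [Hm Cm]].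
  destruct (Hr m ltac:(lia) Cm) as [n Hn].
  destruct (Hs m ltac:(lia) Cm) as [n' Hn'].
  assert (Hpre : prefix r n = prefix s n') by (apply code_inj; congruence).
  assert (n' = n) as ->.
  { rewrite <- (length_prefix r n), <- (length_prefix s n'), Hpre; reflexivity. }
  (* m >= 2^(k+1), so the segment coded by m is longer than k *)
  assert (Hk : k < n).
  { pose proof (code_lt_pow (prefix r n)) as Hlt; rewrite length_prefix in Hlt.
    enough (k + 1 < n + 1) by lia.
    apply (Nat.pow_lt_mono_r_iff 2); lia. }
  rewrite <- (nth_prefix r n k Hk), <- (nth_prefix s n k Hk), Hpre; reflexivity.
Qed.

Lemma colouring_splitting (A : nat -> Prop) (Cs : list (nat -> Prop)) :
  (forall C, In C Cs -> ~ almost_sub C A) ->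
  exists (f : nat -> bool) (M : nat), (forall n, A n -> f n = false) /\
    forall C, In C Cs -> exists i j, i < M /\ j < M /\ C i /\ C j /\ f i <> f j.
Proof.
  induction Cs as [|C Cs IH]; intros HCs.
  - exists (fun _ => false), 0; split; [auto | intros C []].
  - destruct IH as [f [M [HfA HM]]]; [intros; apply HCs; right; assumption|].
    assert (outside : forall n, exists m, n <= m /\ C m /\ ~ A m).
    { intros n; apply NNPP; intros Hno; apply (HCs C (or_introl eq_refl)).
      exists n; intros m Hm Cm; apply NNPP; intros Am; apply Hno; eauto. }
    destruct (outside M) as [p [Hp [Cp Ap]]].
    destruct (outside (p + 1)) as [q [Hq [Cq Aq]]].
    exists (fun n => if n =? q then negb (f p) else f n), (q + 1); split.
    + intros n An; destruct (Nat.eqb_spec n q); [subst; contradiction | auto].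
    + intros C' [<-|HC'].
      * exists p, q; cbv beta; repeat split; try lia; try assumption.
        rewrite Nat.eqb_refl, (proj2 (Nat.eqb_neq p q)) by lia.
        destruct (f p); discriminate.
      * destruct (HM C' HC') as [i [j [Hi [Hj [Ci [Cj Hij]]]]]].
        exists i, j; cbv beta.
        rewrite (proj2 (Nat.eqb_neq i q)), (proj2 (Nat.eqb_neq j q)) by lia.
        repeat split; auto; lia.
Qed.

Lemma long_S_outside_cover (A : nat -> Prop) (Cs : list (nat -> Prop)) (N : nat) :
  (forall C, In C Cs -> ~ almost_sub C A) ->
  exists s, N <= length s /\ S A s /\ forall C, In C Cs -> ~ S C s.
Proof.
  intros HCs; destruct (colouring_splitting A Cs HCs) as [f [M [HfA HM]]].
  exists (prefix f (N + M)); rewrite length_prefix; repeat split; [lia| |].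
  - intros i j Ai Aj Hi Hj; rewrite length_prefix in Hi, Hj.
    rewrite !nth_prefix, HfA, (HfA j) by assumption; reflexivity.
  - intros C HC SC; destruct (HM C HC) as [i [j [Hi [Hj [Ci [Cj Hij]]]]]].
    apply Hij; rewrite <- (nth_prefix f (N + M) i), <- (nth_prefix f (N + M) j)
      by lia.
    apply SC; rewrite ?length_prefix; auto; lia.
Qed.

Lemma finite_set_length_bound (P : list bool -> Prop) :
  finite_set P -> exists N, forall s, P s -> length s < N.
Proof.
  intros [l Hl]; exists (list_max (map (@length bool) l) + 1); intros s Ps.
  pose proof (proj1 (list_max_le (map (@length bool) l) _) (le_n _)) as Hmax.
  rewrite Forall_forall in Hmax.
  specialize (Hmax (length s) (in_map _ _ _ (Hl s Ps))); lia.
Qed.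

Lemma almost_sub_of_S_subset_star (A : nat -> Prop) (Cs : list (nat -> Prop))
    (X : list bool -> Prop) :
  (forall s, X s -> exists C, In C Cs /\ S C s) ->
  subset_star (S A) X ->
  exists C, In C Cs /\ almost_sub C A.
Proof.
  intros Hcover HAX; apply NNPP; intros Hno.
  destruct (finite_set_length_bound _ HAX) as [N HN].
  destruct (long_S_outside_cover A Cs N) as [s [Hs [SAs HsCs]]].
  { intros C HC HCA; apply Hno; eauto. }
  enough (length s < N) by lia.
  apply HN; split; [assumption|].
  intros Xs; destruct (Hcover s Xs) as [C [HC SCs]]; exact (HsCs C HC SCs).
Qed.

Lemma exists_fibre_onto_row (idx : (nat -> nat -> bool) -> nat) :
  exists n, forall b : nat -> bool, exists a, idx a = n /\ a n = b.
Proof.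
  apply NNPP; intros Hno.
  assert (missed : forall n, exists b : nat -> bool, forall a, idx a = n -> a n <> b).
  { intros n; apply NNPP; intros Hn; apply Hno; exists n; intros b.
    apply NNPP; intros Hb; apply Hn; exists b; intros a Ha Hab; apply Hb; eauto. }
  destruct (choice _ missed) as [diag Hdiag].
  exact (Hdiag (idx diag) diag eq_refl eq_refl).
Qed.

Definition flatten_seq (a : nat -> nat -> bool) (k : nat) : bool :=
  let (i, j) := Cantor.of_nat k in a i j.

Lemma flatten_seq_inj (a b : nat -> nat -> bool) :
  flatten_seq a = flatten_seq b -> a = b.
Proof.
  intros Hab; apply functional_extensionality; intros i.
  apply functional_extensionality; intros j.
  pose proof (f_equal (fun f => f (Cantor.to_nat (i, j))) Hab) as Hij.
  unfold flatten_seq in Hij; rewrite Cantor.cancel_of_to in Hij; exact Hij.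
Qed.

(* [exists_fibre_onto_row] makes the position of [flatten_seq a] in its list
   constant on a continuum of [a]'s, told apart by their row [n]. *)
Lemma c_le_card_of_list_cover {T : Type} (P : T -> Prop) (h : T -> list (nat -> bool)) :
  (forall r, exists t, P t /\ In r (h t)) -> c_le_card P.
Proof.
  intros Hcover; destruct (choice _ Hcover) as [g Hg].
  assert (Hpos : forall a, exists i,
             nth i (h (g (flatten_seq a))) (fun _ => false) = flatten_seq a).
  { intros a; destruct (@In_nth _ _ _ (fun _ => false) (proj2 (Hg (flatten_seq a))))
      as [i [_ Hi]]; eauto. }
  destruct (choice _ Hpos) as [idx Hidx].
  destruct (exists_fibre_onto_row idx) as [n Hn].
  destruct (choice _ Hn) as [row Hrow].
  exists (fun b => exist P (g (flatten_seq (row b))) (proj1 (Hg _))).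
  intros b b' Hbb'; apply (f_equal (@proj1_sig _ _)) in Hbb'; simpl in Hbb'.
  destruct (Hrow b) as [Hib Hb], (Hrow b') as [Hib' Hb'].
  rewrite <- Hb, <- Hb'; apply (f_equal (fun a => a n)), flatten_seq_inj.
  rewrite <- (Hidx (row b)), <- (Hidx (row b')), Hib, Hib', Hbb'; reflexivity.
Qed.

Definition cover_of (X : list bool -> Prop) : list (nat -> Prop) :=
  epsilon (inhabits [])
    (fun Cs => (forall C, In C Cs -> infinite_nat C) /\
               forall s, X s -> exists C, In C Cs /\ S C s).

Lemma cover_of_spec (X : list bool -> Prop) : Spl X ->
  (forall C, In C (cover_of X) -> infinite_nat C) /\
  forall s, X s -> exists C, In C (cover_of X) /\ S C s.
Proof. exact (epsilon_spec _ _). Qed.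

Definition branch_of (C : nat -> Prop) : nat -> bool :=
  epsilon (inhabits (fun _ => false)) (fun r => almost_sub C (branch r)).

Lemma branch_of_eq (C : nat -> Prop) (r : nat -> bool) :
  infinite_nat C -> almost_sub C (branch r) -> branch_of C = r.
Proof.
  intros HC HCr; apply (branch_almost_unique C); [assumption | | assumption].
  exact (epsilon_spec _ (fun r => almost_sub C (branch r)) (ex_intro _ r HCr)).
Qed.

Definition branches_of (X : list bool -> Prop) : list (nat -> bool) :=
  map branch_of (cover_of X).

Lemma In_branches_of (X : list bool -> Prop) (r : nat -> bool) :
  Spl X -> subset_star (S (branch r)) X -> In r (branches_of X).
Proof.
  intros HX HrX; destruct (cover_of_spec X HX) as [Hinf Hcover].
  destruct (almost_sub_of_S_subset_star _ _ _ Hcover HrX) as [C [HC HCr]].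
  rewrite <- (branch_of_eq C r (Hinf C HC) HCr); apply in_map; assumption.
Qed.

Theorem mainTheorem12 :
  (exists F : (list bool -> Prop) -> Prop, cofinal_Spl F /\ card_le_c F) /\
  (forall F : (list bool -> Prop) -> Prop, cofinal_Spl F -> c_le_card F).
Proof.
  split.
  - exists Spl; split; [apply cofinal_Spl_Spl | apply card_le_c_sets_of_list_bool].
  - intros F [HFSpl HF]; apply (c_le_card_of_list_cover F branches_of); intros r.
    destruct (HF _ (Spl_S _ (infinite_branch r))) as [X [FX HrX]].
    exists X; split; [assumption | apply In_branches_of; auto].
Qed.
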